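(* Let $X^{\mathrm{aff}}$ be one of the affine extensions $A_4^=$, $D_6^>$, $D_6^=$, $D_6^<$, with extended Cartan matrix $A^{\mathrm{aff}}=(A^{\mathrm{aff}}_{ij})_{0\le i,j\le n}$, simple roots $\alpha_1,\dots,\alpha_n$ (a basis of $V_n$), affine root $\alpha_0\in V_n$, and projection $\pi\in\{\pi_\parallel,\pi_\perp\}$ as in the context. Let $\rho$ be any Dynkin diagram automorphism of $X^{\mathrm{aff}}$, i.e. a permutation of $\{0,1,\dots,n\}$ with $A^{\mathrm{aff}}_{\rho(i)\rho(j)}=A^{\mathrm{aff}}_{ij}$ for all $i,j$ (this includes the automorphisms of the unextended diagrams $A_4$ and $D_6$, extended by $\rho(0)=0$). Then $\alpha_{\rho(1)},\dots,\alpha_{\rho(n)}$ is a basis of $V_n$; if $\pi^\rho:V_n\to\mathbb{R}^m$ denotes the linear map with $\pi^\rho(\alpha_{\rho(i)})=\pi(\alpha_i)$ for $i=1,\dots,n$, then $\pi^\rho(\alpha_{\rho(0)})=\pi(\alpha_0)$. Consequently the induced affine root, and hence the induced Cartan matrix $\hat A_{ij}=2(a_i\mid a_j)/(a_i\mid a_i)$ ($a_0$ the induced affine root, $a_1,\dots,a_m$ the simple roots of $H_m$), is the same whether the projection $\pi$ or the automorphism-twisted projection $\pi^\rho$ is used.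
   Context: Let $\tau=\tfrac12(1+\sqrt5)$, $\sigma=\tfrac12(1-\sqrt5)$. $V_n$ is a real vector space with basis $\alpha_1,\dots,\alpha_n$. Labelling: $A_4$: chain $\alpha_1-\alpha_2-\alpha_3-\alpha_4$; $D_6$: chain $\alpha_1-\cdots-\alpha_5$ with $\alpha_6$ joined to $\alpha_4$. The Cartan matrix of a simply-laced diagram has $A_{ii}=2$, $A_{ij}=-1$ if nodes $i,j$ are joined and $0$ otherwise. Extended Cartan matrices (indices $0,\dots,n$): $A_4^=$: the simply-laced cycle $0-1-2-3-4-0$; $D_6^=$: the $D_6$ diagram with node $0$ joined to node $2$ (simply laced); $D_6^<$: the $D_6$ Cartan matrix extended by node $0$ with $A_{01}=-2$, $A_{10}=-1$, $A_{0j}=A_{j0}=0$ for $j\ge2$; $D_6^>$: same but $A_{01}=-1$, $A_{10}=-2$. Affine roots in $V_n$: $A_4^=$: $-\alpha_0=\alpha_1+\alpha_2+\alpha_3+\alpha_4$; $D_6^=$: $-\alpha_0=\alpha_1+2\alpha_2+2\alpha_3+2\alpha_4+\alpha_5+\alpha_6$; $D_6^<$: $-\alpha_0=\alpha_1+\alpha_2+\alpha_3+\alpha_4+\tfrac12\alpha_5+\tfrac12\alpha_6$; $D_6^>$: $-\alpha_0=2\alpha_1+2\alpha_2+2\alpha_3+2\alpha_4+\alpha_5+\alpha_6$. Target: for $H_3$ ($m=3$), vectors $a_1,a_2,a_3\in\mathbb{R}^3$ with $(a_i\mid a_i)=1$, $(a_1\mid a_2)=-\tfrac12$, $(a_2\mid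 a_3)=-\tfrac\tau2$, $(a_1\mid a_3)=0$; for $H_2$ ($m=2$), $a_1,a_2\in\mathbb{R}^2$ with $(a_i\mid a_i)=1$, $(a_1\mid a_2)=-\tfrac\tau2$. Vectors $\bar a_i$ are defined likewise with $\tau$ replaced by $\sigma$. Projections: $\pi_\parallel:V_6\to\mathbb{R}^3$ ($D_6\to H_3$) by $\alpha_1\mapsto a_1$, $\alpha_2\mapsto a_2$, $\alpha_3\mapsto\tau a_3$, $\alpha_4\mapsto\tau a_2$, $\alpha_5\mapsto\tau a_1$, $\alpha_6\mapsto a_3$; $\pi_\parallel:V_4\to\mathbb{R}^2$ ($A_4\to H_2$) by $\alpha_1\mapsto a_1$, $\alpha_2\mapsto\tau a_2$, $\alpha_3\mapsto\tau a_1$, $\alpha_4\mapsto a_2$. $\pi_\perp$ is given by the same formulas with $\tau\to\sigma$ and $a_i\to\bar a_i$. The induced affine root is $\pi(\alpha_0)$. *)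

From HB Require Import structures.
From mathcomp Require Import all_boot all_order all_algebra.
Unset Printing Implicit Defensive.
Import Order.TTheory GRing.Theory Num.Theory.
Local Open Scope ring_scope.

Inductive afftype := A4eq | D6gt | D6eq | D6lt.
Inductive projkind := Par | Perp.

Definition dimn (X : afftype) : nat := match X with A4eq => 4 | _ => 6 end.
(* m = dimension of the target (H_2 or H_3); written as k.+1 *)
Definition dimmp (X : afftype) : nat := match X with A4eq => 1 | _ => 2 end.
Definition dimm (X : afftype) : nat := (dimmp X).+1.

Definition adj (es : seq (nat * nat)) (i j : nat) : bool :=
  ((i, j) \in es) || ((j, i) \in es).
Definition D6edges : seq (nat * nat) := [:: (1,2); (2,3); (3,4); (4,5); (4,6)]%N.

Definition cartanN (X : afftype) (i j : nat) : int :=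
  if i == j then 2 else
  match X with
  | A4eq => if adj [:: (0,1); (1,2); (2,3); (3,4); (4,0)]%N i j then -1 else 0
  | D6eq => if adj (D6edges ++ [:: (0,2)%N]) i j then -1 else 0
  | D6lt => if (i, j) == (0,1)%N then -2 else if (i, j) == (1,0)%N then -1
            else if adj D6edges i j then -1 else 0
  | D6gt => if (i, j) == (0,1)%N then -1 else if (i, j) == (1,0)%N then -2
            else if adj D6edges i j then -1 else 0
  end.

Definition cartan (X : afftype) (i j : 'I_(dimn X).+1) : int := cartanN X i j.

Section Roots.
Variable R : rcfType.

Definition tau : R := (1 + Num.sqrt 5) / 2.
Definition sigma : R := (1 - Num.sqrt 5) / 2.
Definition tparam (P : projkind) : R := if P is Par then tau else sigma.

(* -alpha_0 = sum_i coefN X (i-1) alpha_i ; list index 0 <-> alpha_1 *)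
Definition coefN (X : afftype) (i : nat) : R :=
  nth 0 (match X with
         | A4eq => [:: 1; 1; 1; 1]
         | D6eq => [:: 1; 2; 2; 2; 1; 1]
         | D6lt => [:: 1; 1; 1; 1; 1/2; 1/2]
         | D6gt => [:: 2; 2; 2; 2; 1; 1]
         end) i.

Definition alpha0 (X : afftype) : 'rV[R]_(dimn X) := \row_(i < dimn X) - coefN X i.

(* alpha_k for k = 0..n ; alpha_{i+1} is the i-th standard basis vector of V_n *)
Definition salpha (X : afftype) (k : 'I_(dimn X).+1) : 'rV[R]_(dimn X) :=
  if unlift ord0 k is Some i then delta_mx 0 i else alpha0 X.

(* pi(alpha_{i+1}) = (if b then t else 1) *: a_{k+1}, where (b,k) = piSpec X i *)
Definition piSpec (X : afftype) (i : nat) : bool * nat :=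
  nth (false, 0%N) (match X with
    | A4eq => [:: (false,0); (true,1); (true,0); (false,1)]%N
    | _ => [:: (false,0); (false,1); (true,2); (true,1); (true,0); (false,2)]%N
    end) i.

Definition projmx (X : afftype) (t : R) (a : 'I_(dimm X) -> 'rV[R]_(dimm X))
  : 'M[R]_(dimn X, dimm X) :=
  \matrix_(i < dimn X)
    ((if (piSpec X i).1 then t else 1) *: a (@inord (dimmp X) (piSpec X i).2)).

Definition piproj (X : afftype) (t : R) (a : 'I_(dimm X) -> 'rV[R]_(dimm X))
  (v : 'rV[R]_(dimn X)) : 'rV[R]_(dimm X) := v *m projmx X t a.

Definition dot {m : nat} (u v : 'rV[R]_m) : R := (u *m v^T) 0 0.

Definition gramOK (X : afftype) (t : R) (a : 'I_(dimm X) -> 'rV[R]_(dimm X)) : Prop :=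
  let b k := a (@inord (dimmp X) k) in
  match X with
  | A4eq => [/\ dot (b 0%N) (b 0%N) = 1, dot (b 1%N) (b 1%N) = 1
             & dot (b 0%N) (b 1%N) = - t / 2]
  | _ => [/\ dot (b 0%N) (b 0%N) = 1, dot (b 1%N) (b 1%N) = 1 & dot (b 2%N) (b 2%N) = 1]
         /\ [/\ dot (b 0%N) (b 1%N) = - 1 / 2,
                dot (b 1%N) (b 2%N) = - t / 2 & dot (b 0%N) (b 2%N) = 0]
  end.

(* induced Cartan matrix, index 0 <-> induced affine root a0, index i+1 <-> a_{i+1} *)
Definition inducedCartan (X : afftype) (a0 : 'rV[R]_(dimm X))
  (a : 'I_(dimm X) -> 'rV[R]_(dimm X)) : 'M[R]_((dimm X).+1) :=
  let b k := if unlift ord0 k is Some i then a i else a0 in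
  \matrix_(i, j) (2 * dot (b i) (b j) / dot (b i) (b i)).

End Roots.

(* A diagram automorphism preserves the Cartan matrix, hence the row of every
   node up to order; for these four diagrams that row already determines the
   mark of the node, i.e. its coefficient in the null root
   delta = alpha_0 + sum_i coefN_i alpha_i = 0 of V_n.  Reindexing the relation
   sum_k mark_k alpha_k = 0 along rho therefore expresses alpha_(rho 0) through
   the alpha_(rho i), i >= 1, with the same coefficients that express alpha_0
   through the alpha_i.  This shows the alpha_(rho i) span V_n, and applying
   any linear map matching pi on them gives pi^rho(alpha_(rho 0)) = pi(alpha_0). *)
From Pilot Require Import Defs.
From mathcomp Require Import all_boot all_order all_fingroup all_algebra.
From mathcomp Require Import ring.
Import GRing.Theory Num.Theory.
Local Open Scope ring_scope.

Lemma perm_map_enum_perm (T : finType) (U : eqType) (g : T -> U) (rho : {perm T}) :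
  perm_eq [seq g (rho j) | j <- enum T] [seq g j | j <- enum T].
Proof.
rewrite (map_comp g rho); apply: perm_map; apply: uniq_perm.
- by rewrite (map_inj_uniq perm_inj) enum_uniq.
- exact: enum_uniq.
move=> j; rewrite mem_enum; apply/mapP; exists ((rho^-1)%g j); last by rewrite permKV.
by rewrite mem_enum.
Qed.

Lemma perm_dependence {F : nzRingType} {V : lmodType F} {n : nat}
    {v : 'I_n.+1 -> V} {c : 'I_n.+1 -> F} {rho : {perm 'I_n.+1}} :
  \sum_k c k *: v k = 0 -> c ord0 = 1 -> (forall k, c (rho k) = c k) ->
  v (rho ord0) = - \sum_(i < n) c (lift ord0 i) *: v (rho (lift ord0 i)).
Proof.
move=> dep c0 c_rho; apply/eqP; rewrite -addr_eq0.
rewrite (reindex_inj (@perm_inj _ rho)) big_ord_recl /= c_rho c0 scale1r in dep.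
by under eq_bigr do rewrite -c_rho; rewrite dep.
Qed.

Lemma linear_perm_dependence {F : nzRingType} {V W : lmodType F} {n : nat}
    (g : {linear V -> W}) {v : 'I_n.+1 -> V} {c : 'I_n.+1 -> F}
    {rho : {perm 'I_n.+1}} :
  \sum_k c k *: v k = 0 -> c ord0 = 1 -> (forall k, c (rho k) = c k) ->
  g (v (rho ord0)) = - \sum_(i < n) c (lift ord0 i) *: g (v (rho (lift ord0 i))).
Proof.
move=> dep c0 c_rho; rewrite (perm_dependence dep c0 c_rho) linearN linear_sum.
by under eq_bigr do rewrite linearZ.
Qed.

Lemma basis_of_delta_span (F : fieldType) (n : nat) (s : seq 'rV[F]_n) :
  size s = n -> (forall i, delta_mx 0 i \in <<s>>%VS) -> basis_of fullv s.
Proof.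
move=> size_s delta_s; rewrite basisEdim size_s dimvf /dim /= mul1n leqnn andbT.
apply/subvP => v _; rewrite (row_sum_delta v) rpred_sum // => i _.
by rewrite rpredZ.
Qed.

Definition cartan_row (X : afftype) (i : nat) : seq int :=
  [seq cartanN X i j | j <- iota 0 (dimn X).+1].

Lemma cartan_row_perm (X : afftype) (rho : {perm 'I_(dimn X).+1}) :
  (forall i j, cartan X (rho i) (rho j) = cartan X i j) ->
  forall i, perm_eq (cartan_row X (rho i)) (cartan_row X i).
Proof.
move=> cartan_rho i.
have row_enum (k : 'I_(dimn X).+1) :
    cartan_row X k = [seq cartan X k j | j <- enum 'I_(dimn X).+1].
  by rewrite /cartan_row -val_enum_ord -map_comp.
rewrite !row_enum -(eq_map (cartan_rho i)) perm_sym.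
exact: perm_map_enum_perm.
Qed.

(* Marks lie in (1/2)N; doubled they become naturals, so that the agreement of
   marks can be decided by computation. *)
Definition mark2 (X : afftype) (k : nat) : nat :=
  nth 0%N (match X with
           | A4eq => [:: 2; 2; 2; 2; 2]
           | D6eq => [:: 2; 2; 4; 4; 4; 2; 2]
           | D6lt => [:: 2; 2; 2; 2; 2; 1; 1]
           | D6gt => [:: 2; 4; 4; 4; 4; 2; 2]
           end)%N k.

Lemma mark2_cartan_row (X : afftype) (i j : nat) :
  (i <= dimn X)%N -> (j <= dimn X)%N ->
  perm_eq (cartan_row X i) (cartan_row X j) -> mark2 X i = mark2 X j.
Proof.
have decide : all (fun i => all (fun j =>
    perm_eq (cartan_row X i) (cartan_row X j) ==> (mark2 X i == mark2 X j))
    (iota 0 (dimn X).+1)) (iota 0 (dimn X).+1).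
  by case: X; vm_compute.
move=> le_i le_j rows_ij; apply/eqP.
move: decide => /allP/(_ i); rewrite mem_iota ltnS le_i => /(_ isT).
by move=> /allP/(_ j); rewrite mem_iota ltnS le_j => /(_ isT) /implyP; apply.
Qed.

Section Marks.
Variable R : rcfType.

Definition mark (X : afftype) (k : nat) : R :=
  if k is i.+1 then Defs.coefN R X i else 1.

Lemma mark_mark2 (X : afftype) (k : nat) :
  (k <= dimn X)%N -> mark X k = (mark2 X k)%:R / 2.
Proof.
by case: X; do 7? (case: k => [_|k]; first by rewrite /mark /Defs.coefN /mark2 /=; field).
Qed.

Lemma mark_perm (X : afftype) (rho : {perm 'I_(dimn X).+1}) :
  (forall i j, cartan X (rho i) (rho j) = cartan X i j) ->
  forall k, mark X (rho k) = mark X k.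
Proof.
move=> cartan_rho k; rewrite !mark_mark2 ?leq_ord //; congr (_%:R / 2).
by apply: mark2_cartan_row; rewrite ?leq_ord ?cartan_row_perm.
Qed.

Lemma sum_mark_salpha (X : afftype) :
  \sum_(k < (dimn X).+1) mark X k *: salpha R X k = 0.
Proof.
rewrite big_ord_recl /= scale1r /salpha unlift_none.
under eq_bigr do rewrite liftK.
apply/rowP => j; rewrite !mxE summxE (bigD1 j) //= big1 => [|i /negbTE ij].
  by rewrite !mxE !eqxx mulr1 addr0 addNr.
by rewrite !mxE eq_sym ij andbF mulr0.
Qed.

End Marks.

Section PermutedRoots.
Variables (R : rcfType) (X : afftype) (rho : {perm 'I_(dimn X).+1}).
Hypothesis cartan_rho : forall i j, cartan X (rho i) (rho j) = cartan X i j.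

Let mark0 : mark R X (@ord0 (dimn X)) = 1. Proof. by []. Qed.

Lemma basis_salpha_perm :
  basis_of fullv [seq salpha R X (rho (lift ord0 i)) | i <- enum 'I_(dimn X)].
Proof.
set s := [seq _ | _ <- _]; apply: basis_of_delta_span.
  by rewrite size_map size_enum_ord.
have salpha_s i : salpha R X (rho (lift ord0 i)) \in <<s>>%VS.
  by apply/memv_span/map_f; rewrite mem_enum.
move=> i; have -> : delta_mx 0 i = salpha R X (lift ord0 i) by rewrite /salpha liftK.
rewrite -[lift ord0 i](permKV rho).
case: (unliftP ord0 ((rho^-1)%g (lift ord0 i))) => [j|] ->; first exact: salpha_s.
rewrite (perm_dependence (sum_mark_salpha R X) mark0 (mark_perm R X rho cartan_rho)).
by rewrite rpredN rpred_sum // => j _; rewrite rpredZ.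
Qed.

Lemma piproj_salpha_perm (t : R) (a : 'I_(dimm X) -> 'rV[R]_(dimm X))
    (f : {linear 'rV[R]_(dimn X) -> 'rV[R]_(dimm X)}) :
  (forall i, f (salpha R X (rho (lift ord0 i))) = piproj R X t a (salpha R X (lift ord0 i))) ->
  f (salpha R X (rho ord0)) = piproj R X t a (salpha R X ord0).
Proof.
move=> f_rho; have dep := sum_mark_salpha R X.
have mark_1 (k : 'I_(dimn X).+1) : mark R X ((1%g : {perm _}) k) = mark R X k.
  by rewrite perm1.
have pi0 := linear_perm_dependence (mulmxr (projmx R X t a)) dep mark0 mark_1.
rewrite (linear_perm_dependence f dep mark0 (mark_perm R X rho cartan_rho)) /piproj.
rewrite perm1 /= in pi0; rewrite pi0; congr (- _); apply: eq_bigr => i _.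
by rewrite f_rho perm1.
Qed.

End PermutedRoots.

Theorem mainTheorem2 (R : rcfType) (X : afftype) (P : projkind)
  (a : 'I_(dimm X) -> 'rV[R]_(dimm X)) (ha : gramOK R X (tparam R P) a)
  (rho : {perm 'I_(dimn X).+1})
  (hrho : forall i j : 'I_(dimn X).+1, cartan X (rho i) (rho j) = cartan X i j) :
  basis_of fullv [seq salpha R X (rho (lift ord0 i)) | i <- enum 'I_(dimn X)] /\
  forall f : {linear 'rV[R]_(dimn X) -> 'rV[R]_(dimm X)},
    (forall i : 'I_(dimn X),
        f (salpha R X (rho (lift ord0 i))) = piproj R X (tparam R P) a (salpha R X (lift ord0 i))) ->
    f (salpha R X (rho ord0)) = piproj R X (tparam R P) a (salpha R X ord0) /\
    inducedCartan R X (f (salpha R X (rho ord0))) a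
      = inducedCartan R X (piproj R X (tparam R P) a (salpha R X ord0)) a.
Proof.
split; first exact: basis_salpha_perm.
by move=> f f_rho; rewrite (piproj_salpha_perm R X rho hrho _ _ f f_rho).
Qed.
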